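(* Suppose Assumption A holds and Assumption B holds with $p=3$. Let $\{(x^k,m^k)\}_{k\ge0}$ be generated by Algorithm 1 with $q=2$, step sizes $\{\eta_k\}_{k\ge0}$, and parameters satisfying, for all $k\ge0$, $\theta_{k,1}/\gamma_{k,1}+\theta_{k,2}/\gamma_{k,2}=1$, $\theta_{k,1}/\gamma_{k,1}^2+\theta_{k,2}/\gamma_{k,2}^2=1$ and $\theta_{k,1}+\theta_{k,2}\in(0,1)$. Let $\{p_k\}_{k\ge0}$ be a positive sequence with \[ (1-\theta_{k,1}-\theta_{k,2})p_{k+1}\le\big(1-(\theta_{k,1}+\theta_{k,2})/2\big)p_k\qquad\forall k\ge0, \] and define $P_k=f(x^k)+p_k\|m^k-\nabla f(x^k)\|^2$. Then for all $k\ge0$, \[ \mathbb{E}_{\xi^{k+1}}[P_{k+1}]\le P_k-\eta_k\|\nabla f(x^k)\|+\frac{L_1}{2}\eta_k^2+\frac{2\eta_k^2}{(\theta_{k,1}+\theta_{k,2})p_k}+\frac{L_3^2\eta_k^6\theta_{k,1}^2p_{k+1}}{12\gamma_{k,1}^6(\theta_{k,1}+\theta_{k,2})}+\frac{L_3^2\eta_k^6\theta_{k,2}^2p_{k+1}}{12\gamma_{k,2}^6(\theta_{k,1}+\theta_{k,2})}+\frac{L_3^2\eta_k^6p_{k+1}}{12(\theta_{k,1}+\theta_{k,2})}+2(\theta_{k,1}^2+\theta_{k,2}^2)p_{k+1}\sigma^2 . \]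
   Context: Problem: minimize $f:\mathbb{R}^n\to\mathbb{R}$, where only a stochastic gradient estimator $G(\cdot;\xi)$ is accessible, $\xi$ being a random variable with sample space $\Xi$. $\|\cdot\|$ is the Euclidean norm. Assumption A: (a) there is a finite $f_{\mathrm{low}}$ with $f(x)\ge f_{\mathrm{low}}$ for all $x$; (b) there is $L_1>0$ with $\|\nabla f(y)-\nabla f(x)\|\le L_1\|y-x\|$ for all $x,y$; (c) $\mathbb{E}_\xi[G(x;\xi)]=\nabla f(x)$ and $\mathbb{E}_\xi[\|G(x;\xi)-\nabla f(x)\|^2]\le\sigma^2$ for all $x$, for some $\sigma>0$. Assumption B: $f$ is $p$ times continuously differentiable for some $p\ge2$ and there is $L_p>0$ with $\|D^pf(y)-D^pf(x)\|_{(p)}\le L_p\|y-x\|$ for all $x,y$, where $D^pf(x)$ is the $p$th derivative as a symmetric $p$-linear form and $\|\mathcal{T}\|_{(p)}=\max\{\mathcal{T}[h_1,\dots,h_p]:\|h_i\|\le 1\}$. Algorithm 1 (SFOM with multi-extrapolated momentum): inputs $x^0\in\mathbb{R}^n$, step sizes $\eta_k>0$, an integer $q\ge1$, extrapolation parameters $\gamma_{k,t}\in(0,1)$ and weighting parameters $\theta_{k,t}\in\mathbb{R}$ ($1\le t\le q$, $k\ge0$) with $\sum_{t=1}^q\theta_{k,t}\in(0,1)$ for all $k\ge0$. Initialize $x^{-1}=x^0$, $m^{-1}=0$, $(\gamma_{-1,t},\theta_{-1,t})=(1,1/q)$ for all $t$. For $k=0,1,2,\dots$: $z^{k,t}=x^k+\frac{1-\gamma_{k-1,t}}{\gamma_{k-1,t}}(x^k-x^{k-1})$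 for $1\le t\le q$; $m^k=(1-\sum_{t=1}^q\theta_{k-1,t})m^{k-1}+\sum_{t=1}^q\theta_{k-1,t}G(z^{k,t};\xi^k)$; $x^{k+1}=x^k-\eta_k m^k/\|m^k\|$. Here $\xi^0,\xi^1,\dots$ are independent samples of $\xi$ (and $m^k\neq0$ is implicitly assumed). $\mathbb{E}_{\xi^{k+1}}[\cdot]$ denotes expectation with respect to $\xi^{k+1}$ conditional on $\xi^0,\dots,\xi^k$. *)

From HB Require Import structures.
From mathcomp Require Import all_boot all_order all_algebra.
From mathcomp Require Import all_classical all_reals all_analysis.
Set Implicit Arguments. Unset Strict Implicit. Unset Printing Implicit Defensive.
Import Order.TTheory GRing.Theory Num.Theory.
Local Open Scope ring_scope.

Definition dotv (R : realType) (n : nat) (u v : 'rV[R]_n) : R :=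
  \sum_(i < n) u 0 i * v 0 i.
Definition enorm (R : realType) (n : nat) (u : 'rV[R]_n) : R :=
  Num.sqrt (dotv u u).

Definition frechet_at (R : realType) (n : nat) (phi : 'rV[R]_n -> R)
  (x : 'rV[R]_n) (L : 'rV[R]_n -> R) : Prop :=
  (forall (a : R) (u v : 'rV[R]_n), L (a *: u + v) = a * L u + L v) /\
  (forall eps : R, 0 < eps -> exists2 delta : R, 0 < delta &
     forall h : 'rV[R]_n, enorm h < delta ->
       `|phi (x + h) - phi x - L h| <= eps * enorm h).

(* Algorithm 1 (SFOM with multi-extrapolated momentum), general q.
   gamma k t, theta k t are gamma_{k,t}, theta_{k,t} (k >= 0);
   the "previous" parameters at iteration k are those of index k-1,
   with (gamma_{-1,t}, theta_{-1,t}) = (1, 1/q). s j is the sample xi^j. *)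
Definition gam_prev (R : realType) (q : nat) (gamma : nat -> 'I_q -> R)
  (k : nat) (t : 'I_q) : R :=
  if k is k'.+1 then gamma k' t else 1.
Definition th_prev (R : realType) (q : nat) (theta : nat -> 'I_q -> R)
  (k : nat) (t : 'I_q) : R :=
  if k is k'.+1 then theta k' t else q%:R^-1.

Definition sfom_mom (R : realType) (n : nat) (Xi : Type)
  (G : 'rV[R]_n -> Xi -> 'rV[R]_n) (q : nat)
  (gamma theta : nat -> 'I_q -> R) (s : nat -> Xi) (k : nat)
  (x xp mp : 'rV[R]_n) : 'rV[R]_n :=
  (1 - \sum_(t < q) th_prev theta k t) *: mp
  + \sum_(t < q) th_prev theta k t *:
      G (x + ((1 - gam_prev gamma k t) / gam_prev gamma k t) *: (x - xp)) (s k).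

(* state at iteration k: (x^k, x^{k-1}, m^{k-1}) *)
Fixpoint sfom_state (R : realType) (n : nat) (Xi : Type)
  (G : 'rV[R]_n -> Xi -> 'rV[R]_n) (q : nat) (x0 : 'rV[R]_n)
  (eta : nat -> R) (gamma theta : nat -> 'I_q -> R) (s : nat -> Xi)
  (k : nat) : 'rV[R]_n * 'rV[R]_n * 'rV[R]_n :=
  match k with
  | 0 => (x0, x0, 0)
  | k'.+1 =>
      let: (x, xp, mp) := sfom_state G x0 eta gamma theta s k' in
      let m := sfom_mom G gamma theta s k' x xp mp in
      (x - (eta k' / enorm m) *: m, x, m)
  end.

Definition sfom_x (R : realType) (n : nat) (Xi : Type)
  (G : 'rV[R]_n -> Xi -> 'rV[R]_n) (q : nat) (x0 : 'rV[R]_n)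
  (eta : nat -> R) (gamma theta : nat -> 'I_q -> R) (s : nat -> Xi)
  (k : nat) : 'rV[R]_n :=
  (sfom_state G x0 eta gamma theta s k).1.1.

Definition sfom_m (R : realType) (n : nat) (Xi : Type)
  (G : 'rV[R]_n -> Xi -> 'rV[R]_n) (q : nat) (x0 : 'rV[R]_n)
  (eta : nat -> R) (gamma theta : nat -> 'I_q -> R) (s : nat -> Xi)
  (k : nat) : 'rV[R]_n :=
  let: (x, xp, mp) := sfom_state G x0 eta gamma theta s k in
  sfom_mom G gamma theta s k x xp mp.

Definition resample (Xi : Type) (s : nat -> Xi) (j : nat) (xi : Xi) : nat -> Xi :=
  fun i => if i == j then xi else s i.

(* The normalized step has length eta_k, so the descent lemma gives
   f(x^{k+1}) <= f(x^k) - eta_k |grad f(x^k)| + 2 eta_k |m^k - grad f(x^k)| + L1 eta_k^2 / 2.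
   Next, m^{k+1} - grad f(x^{k+1}) = (1 - theta)(m^k - grad f(x^k)) + T + N, where the
   oracle noise N has conditional mean zero, hence only adds at most
   2 (theta_1^2 + theta_2^2) sigma^2 to the expected square.  The remainder T is a
   combination of gradient increments grad f(x^{k+1} + a_t (x^{k+1} - x^k)) - grad f(x^{k+1})
   with a_0 = -1 and a_t = 1/gamma_t - 1, whose weights have vanishing first and second
   moments precisely by the two conditions on theta/gamma; the third-order Taylor
   expansion of grad f then leaves |T| = O(L3 eta_k^3).  Young's inequality and the
   condition on p_k absorb the cross terms. *)

From HB Require Import structures.
From mathcomp Require Import all_boot all_order all_algebra.
From mathcomp Require Import all_classical all_reals all_analysis.
From mathcomp Require Import measurable_realfun ring lra.
Import Order.TTheory GRing.Theory Num.Theory.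
Import numFieldNormedType.Exports.
Set Implicit Arguments. Unset Strict Implicit. Unset Printing Implicit Defensive.
Local Open Scope classical_set_scope.
Local Open Scope ring_scope.

Section EuclideanSpace.
Variables (R : realType) (n : nat).
Implicit Types u v w : 'rV[R]_n.

Lemma dotvC u v : dotv u v = dotv v u.
Proof. by apply: eq_bigr => i _; rewrite mulrC. Qed.

Lemma dotvDl u v w : dotv (u + v) w = dotv u w + dotv v w.
Proof. by rewrite /dotv -big_split; apply: eq_bigr => i _; rewrite mxE mulrDl. Qed.

Lemma dotvZl a u v : dotv (a *: u) v = a * dotv u v.
Proof. by rewrite /dotv mulr_sumr; apply: eq_bigr => i _; rewrite mxE mulrA. Qed.

Lemma dotvBl u v w : dotv (u - v) w = dotv u w - dotv v w.
Proof. by rewrite dotvDl -scaleN1r dotvZl mulN1r. Qed.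

Lemma dotvDr u v w : dotv w (u + v) = dotv w u + dotv w v.
Proof. by rewrite dotvC dotvDl !(dotvC w). Qed.

Lemma dotvZr a u v : dotv v (a *: u) = a * dotv v u.
Proof. by rewrite dotvC dotvZl dotvC. Qed.

Lemma dotvBr u v w : dotv w (u - v) = dotv w u - dotv w v.
Proof. by rewrite dotvC dotvBl !(dotvC w). Qed.

Lemma dotv0l v : dotv 0 v = 0.
Proof. by rewrite -(scale0r 0) dotvZl mul0r. Qed.

Lemma dotv_ge0 u : 0 <= dotv u u.
Proof. by apply: sumr_ge0 => i _; rewrite -expr2 sqr_ge0. Qed.

Lemma dotv_eq0 u : dotv u u = 0 -> u = 0.
Proof.
move=> /eqP; rewrite psumr_eq0 => [/allP u0|i _]; last by rewrite -expr2 sqr_ge0.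
apply/rowP => i; rewrite mxE.
by have := u0 i (mem_index_enum _); rewrite -expr2 sqrf_eq0 => /eqP.
Qed.

Lemma enorm_ge0 u : 0 <= enorm u.
Proof. exact: sqrtr_ge0. Qed.

Lemma enorm_sqr u : enorm u ^+ 2 = dotv u u.
Proof. by rewrite sqr_sqrtr // dotv_ge0. Qed.

Lemma enorm_eq0 u : (enorm u == 0) = (u == 0).
Proof.
apply/eqP/eqP => [u0|->]; last by rewrite /enorm dotv0l sqrtr0.
by apply: dotv_eq0; rewrite -enorm_sqr u0 expr0n.
Qed.

Lemma enorm_gt0 u : (0 < enorm u) = (u != 0).
Proof. by rewrite lt0r enorm_eq0 enorm_ge0 andbT. Qed.

Lemma enormZ a u : enorm (a *: u) = `|a| * enorm u.
Proof.
by rewrite /enorm dotvZl dotvZr mulrA -expr2 sqrtrM ?sqr_ge0 // sqrtr_sqr.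
Qed.

Lemma enormN u : enorm (- u) = enorm u.
Proof. by rewrite -scaleN1r enormZ normrN normr1 mul1r. Qed.

Lemma enormB u v : enorm (u - v) = enorm (v - u).
Proof. by rewrite -enormN opprB. Qed.

Lemma dotv_le u v : dotv u v <= enorm u * enorm v.
Proof.
have [->|u0] := eqVneq u 0; first by rewrite dotv0l /enorm dotv0l sqrtr0 mul0r.
have [->|v0] := eqVneq v 0.
  by rewrite dotvC dotv0l /enorm dotv0l sqrtr0 mulr0.
have := dotv_ge0 (enorm v *: u - enorm u *: v).
rewrite !(dotvBl, dotvBr, dotvZl, dotvZr) -!enorm_sqr (dotvC v u).
have u_gt0 : 0 < enorm u by rewrite enorm_gt0.
have v_gt0 : 0 < enorm v by rewrite enorm_gt0.
have := mulr_gt0 u_gt0 v_gt0; nra.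
Qed.

Lemma normr_dotv_le u v : `|dotv u v| <= enorm u * enorm v.
Proof.
rewrite ler_norml dotv_le andbT lerNl.
by have := dotv_le (- u) v; rewrite -scaleN1r dotvZl mulN1r enormZ normrN normr1 mul1r.
Qed.

Lemma enorm_sqrD u v :
  enorm (u + v) ^+ 2 = enorm u ^+ 2 + 2 * dotv u v + enorm v ^+ 2.
Proof. by rewrite !enorm_sqr dotvDl !dotvDr (dotvC v u); ring. Qed.

Lemma enormD u v : enorm (u + v) <= enorm u + enorm v.
Proof.
have := enorm_ge0 (u + v); have := enorm_ge0 u; have := enorm_ge0 v.
have := enorm_sqrD u v; have := dotv_le u v; nra.
Qed.

Lemma enorm_sqrD_le u v : enorm (u + v) ^+ 2 <= 2 * enorm u ^+ 2 + 2 * enorm v ^+ 2.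
Proof.
have := enorm_sqrD u v; have := enorm_sqrD u (- v).
rewrite enormN dotvC -scaleN1r dotvZl dotvC; have := sqr_ge0 (enorm (u - v)).
nra.
Qed.

(* Convexity of the squared norm at [(1 - t) u + t (v / t)]. *)
Lemma enorm_sqr_convexD_le (t : R) u v : 0 < t <= 1 ->
  enorm ((1 - t) *: u + v) ^+ 2 <= (1 - t) * enorm u ^+ 2 + enorm v ^+ 2 / t.
Proof.
move=> /andP[t_gt0 t_le1].
rewrite enorm_sqrD enormZ exprMn real_normK ?num_real // dotvZl.
have young : 2 * (enorm u * enorm v) <= t * enorm u ^+ 2 + enorm v ^+ 2 / t.
  rewrite -subr_ge0 (_ : _ - _ = (t * enorm u - enorm v) ^+ 2 / t).
    by rewrite divr_ge0 ?sqr_ge0 ?ltW.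
  by field; rewrite gt_eqF.
have : t * (enorm v ^+ 2 / t) = enorm v ^+ 2 by rewrite mulrC divfK ?gt_eqF.
have c_ge0 : 0 <= 1 - t by rewrite subr_ge0.
have := ler_wpM2l c_ge0 (dotv_le u v); have := ler_wpM2l c_ge0 young.
have := enorm_ge0 u; have := enorm_ge0 v; nra.
Qed.

End EuclideanSpace.

Section FrechetCalculus.
Variables (R : realType) (n : nat).
Implicit Types (F : 'rV[R]_n -> R) (x v : 'rV[R]_n).

Lemma frechet_linear0 F x L : frechet_at F x L -> L 0 = 0.
Proof. by move=> [lin _]; have := lin 1 0 0; rewrite scale1r addr0 mul1r; lra. Qed.

Lemma frechet_linearZ F x L : frechet_at F x L -> forall a v, L (a *: v) = a * L v.
Proof.
by move=> FL a v; have := FL.1 a v 0; rewrite !addr0 (frechet_linear0 FL) addr0.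
Qed.

Lemma is_derive_frechet F x v (t : R) L : frechet_at F (x + t *: v) L ->
  is_derive t 1 (fun s => F (x + s *: v)) (L v).
Proof.
move=> FL; set y := x + t *: v.
have LZ := frechet_linearZ FL.
have lim : (fun h : R => h^-1 *: (((fun s => F (x + s *: v)) \o shift t) (h *: 1)
                      - F (x + t *: v))) @ (0 : R)^' --> L v.
  apply/cvgrPdist_le => eps eps_gt0.
  have v1_gt0 : 0 < enorm v + 1 by have := enorm_ge0 v; lra.
  have [del del_gt0 small] := FL.2 (eps / (enorm v + 1)) (divr_gt0 eps_gt0 v1_gt0).
  near=> h.
  have h_neq0 : h != 0 by near: h; exact: nbhs_dnbhs_neq.
  have h_lt : `|h| < del / (enorm v + 1).
    by near: h; apply: dnbhs0_lt; rewrite divr_gt0.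
  rewrite /= /shift /= [h *: 1]mulr1.
  have -> : x + (h + t) *: v = y + h *: v by rewrite /y scalerDl addrAC addrA.
  have hv_lt : enorm (h *: v) < del.
    rewrite enormZ; move: h_lt; rewrite ltr_pdivlMr //; have := normr_ge0 h; nra.
  have := small _ hv_lt; rewrite LZ enormZ.
  have -> : L v - h^-1 *: (F (y + h *: v) - F y) =
            - h^-1 * (F (y + h *: v) - F y - h * L v).
    by rewrite /GRing.scale /=; field.
  rewrite normrM normrN normfV ler_pdivrMl ?normr_gt0 // => le_eps.
  apply: (le_trans le_eps).
  have : eps / (enorm v + 1) * (enorm v + 1) = eps by rewrite divfK ?gt_eqF.
  have := enorm_ge0 v; have := normr_ge0 h; have := divr_gt0 eps_gt0 v1_gt0; nra.
apply: DeriveDef; first by apply/cvg_ex; exists (L v).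
exact: cvg_lim lim.
Unshelve. all: by end_near.
Qed.

Lemma frechet_unique F x L L' : frechet_at F x L -> frechet_at F x L' -> L =1 L'.
Proof.
move=> FL FL' h.
have D : is_derive (0 : R) 1 (fun s => F (x + s *: h)) (L h).
  by apply: is_derive_frechet; rewrite scale0r addr0.
have D' : is_derive (0 : R) 1 (fun s => F (x + s *: h)) (L' h).
  by apply: is_derive_frechet; rewrite scale0r addr0.
by rewrite -(@derive_val _ _ _ _ _ _ _ D) (@derive_val _ _ _ _ _ _ _ D').
Qed.

Lemma frechet_scale F x L (c : R) :
  frechet_at F x L -> frechet_at (fun y => c * F y) x (fun u => c * L u).
Proof.
move=> [lin small]; split=> [a u v|eps eps_gt0]; first by rewrite lin; ring.
have c1_gt0 : 0 < `|c| + 1 by have := normr_ge0 c; lra.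
have [del del_gt0 close] := small (eps / (`|c| + 1)) (divr_gt0 eps_gt0 c1_gt0).
exists del => // h h_lt.
rewrite -!mulrBr normrM; apply: le_trans (ler_wpM2l (normr_ge0 c) (close h h_lt)) _.
have : eps / (`|c| + 1) * (`|c| + 1) = eps by rewrite divfK ?gt_eqF.
have := divr_gt0 eps_gt0 c1_gt0; have := enorm_ge0 h; have := normr_ge0 c; nra.
Qed.

End FrechetCalculus.

Section MeanValue.
Variable R : realType.
Implicit Types g dg h dh : R -> R.

Lemma is_derive_le0_le g dg (a b : R) : (forall t : R, is_derive t 1 g (dg t)) ->
  (forall t : R, a <= t <= b -> dg t <= 0) -> forall t : R, a <= t <= b -> g t <= g a.
Proof.
move=> g_der dg_le0 t; rewrite le_eqVlt => /andP[/orP[/eqP<- //|a_lt_t] t_le_b].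
have g_cont : {within `[a, t], continuous g}.
  by apply: derivable_within_continuous => z _; case: (g_der z).
have [c c_in gE] := MVT a_lt_t (fun z _ => g_der z) g_cont.
rewrite -subr_le0 gE; apply: mulr_le0_ge0; last by rewrite subr_ge0 ltW.
apply: dg_le0.
by move: c_in; rewrite in_itv /= => /andP[ac ct]; rewrite !ltW // (lt_le_trans ct).
Qed.

Lemma mean_value_inequality g dg h dh (a b : R) :
  (forall t : R, is_derive t 1 g (dg t)) -> (forall t : R, is_derive t 1 h (dh t)) ->
  (forall t : R, a <= t <= b -> `|dg t| <= dh t) ->
  forall t : R, a <= t <= b -> `|g t - g a| <= h t - h a.
Proof.
move=> g_der h_der dg_le t t_ab.
have above : g t - h t <= g a - h a.
  apply: (@is_derive_le0_le (fun s => g s - h s) (fun s => dg s - dh s) a b) => //.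
  by move=> s /dg_le; rewrite subr_le0; apply: le_trans; exact: ler_norm.
have below : - g t - h t <= - g a - h a.
  apply: (@is_derive_le0_le (fun s => - g s - h s) (fun s => - dg s - dh s) a b) => //.
  by move=> s /dg_le; rewrite subr_le0; apply: le_trans; rewrite -normrN; exact: ler_norm.
by rewrite ler_norml; apply/andP; split; lra.
Qed.

End MeanValue.

Lemma extrapolation_weight_sqr_le (R : realType) (c th1 th2 g1 g2 : R) :
  0 <= c <= 1 -> 0 < g1 < 1 -> 0 < g2 < 1 ->
  (c + `|th1| * ((1 - g1) / g1) ^+ 3 + `|th2| * ((1 - g2) / g2) ^+ 3) ^+ 2
    <= 3 * (1 + th1 ^+ 2 / g1 ^+ 6 + th2 ^+ 2 / g2 ^+ 6).
Proof.
move=> /andP[c_ge0 c_le1] g1_01 g2_01.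
have ratio_le (th g : R) : 0 < g < 1 ->
    0 <= `|th| * ((1 - g) / g) ^+ 3 <= `|th| / g ^+ 3.
  move=> /andP[g_gt0 g_lt1].
  have r_ge0 : 0 <= ((1 - g) / g) ^+ 3.
    by rewrite exprn_ge0 // divr_ge0 ?subr_ge0 // ltW.
  rewrite mulr_ge0 //=; apply: ler_wpM2l => //.
  rewrite expr_div_n -[X in _ <= X]mul1r ler_pM2r ?invr_gt0 ?exprn_gt0 //.
  by apply: exprn_ile1; lra.
have sqr_ratio (th g : R) : 0 < g -> (`|th| / g ^+ 3) ^+ 2 = th ^+ 2 / g ^+ 6.
  by move=> g_gt0; rewrite expr_div_n real_normK ?num_real // -exprM.
have sum3 (v1 v2 u1 u2 : R) : 0 <= v1 <= u1 -> 0 <= v2 <= u2 ->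
    (c + v1 + v2) ^+ 2 <= 3 * (1 + u1 ^+ 2 + u2 ^+ 2).
  move=> /andP[v1_ge0 v1_le] /andP[v2_ge0 v2_le].
  apply: (@le_trans _ _ ((1 + u1 + u2) ^+ 2)); first by rewrite ler_pXn2r ?nnegrE //; lra.
  by have := sqr_ge0 (1 - u1); have := sqr_ge0 (1 - u2); have := sqr_ge0 (u1 - u2); lra.
move: (g1_01) (g2_01) => /andP[g1_gt0 _] /andP[g2_gt0 _].
by rewrite -(sqr_ratio th1 g1) // -(sqr_ratio th2 g2) // sum3 ?ratio_le.
Qed.

(* AM-GM on [2 eta e] leaves [th pk e^2 / 2], which the weight condition absorbs. *)
Lemma potential_weight_le (R : realType) (th pk p1 eta e : R) : 0 < th -> 0 < pk ->
  (1 - th) * p1 <= (1 - th / 2) * pk ->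
  p1 * (1 - th) * e ^+ 2 + 2 * eta * e <= pk * e ^+ 2 + 2 * eta ^+ 2 / (th * pk).
Proof.
move=> th_gt0 pk_gt0 p_step.
have amgm : 2 * eta * e <= th * pk * e ^+ 2 / 2 + 2 * eta ^+ 2 / (th * pk).
  rewrite -subr_ge0 (_ : _ - _ = (th * pk * e - 2 * eta) ^+ 2 / (2 * (th * pk))).
    by rewrite divr_ge0 ?sqr_ge0 // mulr_ge0 // ltW // mulr_gt0.
  by field; rewrite !gt_eqF.
have := ler_wpM2r (sqr_ge0 e) p_step; lra.
Qed.

Section SmoothObjective.
Variables (R : realType) (n : nat) (f : 'rV[R]_n -> R) (gf : 'rV[R]_n -> 'rV[R]_n).
Variables (D2 : 'rV[R]_n -> 'rV[R]_n -> 'rV[R]_n -> R)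
  (D3 : 'rV[R]_n -> 'rV[R]_n -> 'rV[R]_n -> 'rV[R]_n -> R) (L1 L3 : R).
Hypothesis f_grad : forall x, frechet_at f x (dotv (gf x)).
Hypothesis gf_lip : forall x y, enorm (gf y - gf x) <= L1 * enorm (y - x).
Hypothesis D2_frechet : forall x h, frechet_at (fun y => dotv (gf y) h) x (D2 x h).
Hypothesis D3_frechet : forall x h w, frechet_at (fun y => D2 y h w) x (D3 x h w).
Hypothesis D3_lip : forall x y h1 h2 h3,
  enorm h1 <= 1 -> enorm h2 <= 1 -> enorm h3 <= 1 ->
  D3 y h1 h2 h3 - D3 x h1 h2 h3 <= L3 * enorm (y - x).

Lemma descent_lemma x d : f (x + d) <= f x + dotv (gf x) d + L1 / 2 * enorm d ^+ 2.
Proof.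
set c := dotv (gf x) d; set K := L1 * enorm d ^+ 2.
have f_line (t : R) : is_derive t 1 (fun s => f (x + s *: d)) (dotv (gf (x + t *: d)) d).
  exact: is_derive_frechet.
have g_der (t : R) : is_derive t 1 (fun s => f (x + s *: d) - s * c)
    (dotv (gf (x + t *: d)) d - c).
  by apply: is_derive_eq; rewrite /GRing.scale /=; ring.
have h_der (t : R) : is_derive t 1 (fun s => K / 2 * s ^+ 2) (K * t).
  by apply: is_derive_eq; rewrite /GRing.scale /=; field.
have dg_le (t : R) : 0 <= t <= 1 -> `|dotv (gf (x + t *: d)) d - c| <= K * t.
  move=> /andP[t_ge0 _]; rewrite /c -dotvBl; apply: le_trans (normr_dotv_le _ _) _.
  have := gf_lip x (x + t *: d); rewrite addrAC subrr add0r enormZ ger0_norm //.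
  by rewrite /K; have := enorm_ge0 d; have := enorm_ge0 (gf (x + t *: d) - gf x); nra.
have := mean_value_inequality g_der h_der dg_le (t := 1).
rewrite ler01 lexx => /(_ isT) /(le_trans (ler_norm _)).
rewrite scale1r scale0r addr0 /K; lra.
Qed.

Lemma normalized_step_descent x m (eta : R) : 0 < eta -> m != 0 ->
  f (x - (eta / enorm m) *: m) <=
    f x - eta * enorm (gf x) + 2 * eta * enorm (m - gf x) + L1 / 2 * eta ^+ 2.
Proof.
move=> eta_gt0 m_neq0.
have m_gt0 : 0 < enorm m by rewrite enorm_gt0.
set c := eta / enorm m.
have cm : c * enorm m = eta by rewrite /c divfK ?gt_eqF.
have c_gt0 : 0 < c by rewrite divr_gt0.
have gm : dotv (gf x) m = enorm m ^+ 2 - dotv (m - gf x) m.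
  by rewrite dotvBl enorm_sqr; ring.
have tri : enorm (gf x) <= enorm m + enorm (m - gf x).
  by have := enormD m (gf x - m); rewrite addrC subrK enormB.
have := descent_lemma x (- (c *: m)).
rewrite -scaleNr dotvZr gm enormZ normrN gtr0_norm // exprMn.
have := ler_wpM2l (ltW c_gt0) (dotv_le (m - gf x) m).
have := ler_wpM2l (ltW (mulr_gt0 c_gt0 m_gt0)) tri.
have : c ^+ 2 * enorm m ^+ 2 = eta ^+ 2 by rewrite -exprMn cm.
have := enorm_ge0 (m - gf x); nra.
Qed.

Lemma D2Z x h a w : D2 x h (a *: w) = a * D2 x h w.
Proof. by rewrite (frechet_linearZ (D2_frechet x h)). Qed.

(* Homogeneity in the middle slot holds because [D3 x h] is the derivative of [D2 . h]. *)
Lemma D3Z x h a w : D3 x h (a *: w) (a *: w) = a ^+ 2 * D3 x h w w.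
Proof.
have mid : D3 x h (a *: w) =1 (fun u => a * D3 x h w u).
  apply: (frechet_unique (D3_frechet x h (a *: w))).
  have -> : (fun y => D2 y h (a *: w)) = (fun y => a * D2 y h w).
    by apply/funext => y; rewrite D2Z.
  exact: frechet_scale (D3_frechet x h w).
by rewrite mid (frechet_linearZ (D3_frechet x h w)) mulrA -expr2.
Qed.

Lemma D3_diag_lipschitz x y h w : enorm h <= 1 ->
  `|D3 y h w w - D3 x h w w| <= L3 * enorm (y - x) * enorm w ^+ 2.
Proof.
move=> h_le1.
have [->|w_neq0] := eqVneq w 0.
  by rewrite -(scale0r 0) !D3Z enormZ normr0 !(expr0n, mul0r) subrr normr0 mulr0.
have w_gt0 : 0 < enorm w by rewrite enorm_gt0.
set u := (enorm w)^-1 *: w.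
have u_le1 : enorm u <= 1.
  by rewrite enormZ ger0_norm ?invr_ge0 ?enorm_ge0 // mulVf ?gt_eqF.
have D3E z : D3 z h w w = enorm w ^+ 2 * D3 z h u u.
  by rewrite -D3Z scalerA divff ?gt_eqF // scale1r.
rewrite !D3E -mulrBr normrM ger0_norm ?sqr_ge0 // mulrC ler_wpM2r ?sqr_ge0 //.
rewrite ler_norml (D3_lip _ _ h_le1 u_le1 u_le1) andbT.
by have := D3_lip y x h_le1 u_le1 u_le1; rewrite enormB; lra.
Qed.

Lemma D2_taylor2 x w h (t : R) : enorm h <= 1 -> 0 <= t <= 1 ->
  `|D2 (x + t *: w) h w - D2 x h w - t * D3 x h w w| <= L3 * enorm w ^+ 3 / 2 * t ^+ 2.
Proof.
move=> h_le1 t01; set c := D3 x h w w; set K := L3 * enorm w ^+ 3.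
have D2_line (s : R) :
    is_derive s 1 (fun r => D2 (x + r *: w) h w) (D3 (x + s *: w) h w w).
  exact: is_derive_frechet (D3_frechet _ h w).
have g_der (s : R) : is_derive s 1 (fun r => D2 (x + r *: w) h w - r * c)
    (D3 (x + s *: w) h w w - c).
  by apply: is_derive_eq; rewrite /GRing.scale /=; ring.
have h_der (s : R) : is_derive s 1 (fun r => K / 2 * r ^+ 2) (K * s).
  by apply: is_derive_eq; rewrite /GRing.scale /=; field.
have dg_le (s : R) : 0 <= s <= 1 -> `|D3 (x + s *: w) h w w - c| <= K * s.
  move=> /andP[s_ge0 _]; have := D3_diag_lipschitz x (x + s *: w) w h_le1.
  rewrite addrAC subrr add0r enormZ (ger0_norm s_ge0).
  by have -> : L3 * (s * enorm w) * enorm w ^+ 2 = K * s by rewrite /K; ring.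
have := mean_value_inequality g_der h_der dg_le t01.
by rewrite scale0r addr0 mul0r subr0 expr0n /= mulr0 subr0 addrAC.
Qed.

Lemma gradient_taylor3 x w h : enorm h <= 1 ->
  `|dotv (gf (x + w)) h - dotv (gf x) h - D2 x h w - D3 x h w w / 2|
    <= L3 * enorm w ^+ 3 / 6.
Proof.
move=> h_le1; set b := D2 x h w; set c := D3 x h w w; set K := L3 * enorm w ^+ 3.
have grad_line (s : R) :
    is_derive s 1 (fun r => dotv (gf (x + r *: w)) h) (D2 (x + s *: w) h w).
  exact: is_derive_frechet (D2_frechet _ h).
have g_der (s : R) :
    is_derive s 1 (fun r => dotv (gf (x + r *: w)) h - r * b - c / 2 * r ^+ 2)
      (D2 (x + s *: w) h w - b - s * c).
  by apply: is_derive_eq; rewrite /GRing.scale /=; field.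
have h_der (s : R) : is_derive s 1 (fun r => K / 6 * r ^+ 3) (K / 2 * s ^+ 2).
  by apply: is_derive_eq; rewrite /GRing.scale /=; field.
have dg_le (s : R) : 0 <= s <= 1 -> `|D2 (x + s *: w) h w - b - s * c| <= K / 2 * s ^+ 2.
  by move=> s01; exact: D2_taylor2.
have := mean_value_inequality g_der h_der dg_le (t := 1).
rewrite ler01 lexx => /(_ isT).
rewrite scale1r scale0r addr0 expr1n expr0n /= !(mulr1, mulr0, mul0r, subr0).
by rewrite !ler_norml => /andP[lo hi]; apply/andP; split; lra.
Qed.

(* Weights [c.1] at points [x + c.2 d] whose first two moments vanish kill the
   first- and second-order Taylor terms of [gf] at [x]. *)
Lemma moment_cancel_gradient_le (s : seq (R * R)) x d : 0 <= L3 ->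
  \sum_(c <- s) c.1 * c.2 = 0 -> \sum_(c <- s) c.1 * c.2 ^+ 2 = 0 ->
  enorm (\sum_(c <- s) c.1 *: (gf (x + c.2 *: d) - gf x))
    <= L3 * enorm d ^+ 3 / 6 * \sum_(c <- s) `|c.1| * `|c.2| ^+ 3.
Proof.
move=> L3_ge0 mom1 mom2; set T := \sum_(c <- s) _.
have [->|T_neq0] := eqVneq T 0.
  rewrite /enorm dotv0l sqrtr0 mulr_ge0 ?divr_ge0 ?mulr_ge0 ?exprn_ge0 ?enorm_ge0 //.
  by rewrite sumr_ge0 // => c _; rewrite mulr_ge0 ?exprn_ge0.
have T_gt0 : 0 < enorm T by rewrite enorm_gt0.
set h := (enorm T)^-1 *: T.
have h_le1 : enorm h <= 1.
  by rewrite enormZ ger0_norm ?invr_ge0 ?enorm_ge0 // mulVf ?gt_eqF.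
pose rem a := dotv (gf (x + a *: d)) h - dotv (gf x) h - D2 x h (a *: d)
              - D3 x h (a *: d) (a *: d) / 2.
have expand c : dotv (c.1 *: (gf (x + c.2 *: d) - gf x)) h =
    c.1 * rem c.2 + c.1 * c.2 * D2 x h d + c.1 * c.2 ^+ 2 * (D3 x h d d / 2).
  by rewrite dotvZl dotvBl /rem D2Z D3Z; ring.
have -> : enorm T = \sum_(c <- s) c.1 * rem c.2.
  have -> : enorm T = dotv T h.
    by rewrite dotvZr -enorm_sqr expr2 mulrA mulVf ?gt_eqF ?mul1r.
  rewrite (big_morph (fun u => dotv u h) (fun u v => dotvDl u v h) (dotv0l h)).
  by rewrite (eq_bigr _ (fun c _ => expand c)) !big_split /= -!mulr_suml mom1 mom2 !mul0r !addr0.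
rewrite mulr_sumr; apply: ler_sum => c _.
apply: le_trans (ler_norm _) _; rewrite normrM.
apply: le_trans (ler_wpM2l (normr_ge0 _) (gradient_taylor3 _ _ h_le1)) _.
by rewrite enormZ exprMn; lra.
Qed.

Lemma extrapolated_gradient_error x xp (th1 th2 g1 g2 : R) : 0 <= L3 ->
  0 < g1 < 1 -> 0 < g2 < 1 -> 0 <= th1 + th2 <= 1 ->
  th1 / g1 + th2 / g2 = 1 -> th1 / g1 ^+ 2 + th2 / g2 ^+ 2 = 1 ->
  enorm ((1 - (th1 + th2)) *: gf xp + th1 *: gf (x + ((1 - g1) / g1) *: (x - xp))
         + th2 *: gf (x + ((1 - g2) / g2) *: (x - xp)) - gf x) ^+ 2
  <= L3 ^+ 2 * enorm (x - xp) ^+ 6 / 12 * (1 + th1 ^+ 2 / g1 ^+ 6 + th2 ^+ 2 / g2 ^+ 6).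
Proof.
move=> L3_ge0 g1_01 g2_01 th_01 mom1 mom2.
move: (g1_01) (g2_01) => /andP[g1_gt0 _] /andP[g2_gt0 _].
set a1 := (1 - g1) / g1; set a2 := (1 - g2) / g2; set c := 1 - (th1 + th2).
have c_01 : 0 <= c <= 1 by rewrite /c; lra.
have a1_ge0 : 0 <= a1 by rewrite divr_ge0 ?subr_ge0 // ltW; case/andP: g1_01.
have a2_ge0 : 0 <= a2 by rewrite divr_ge0 ?subr_ge0 // ltW; case/andP: g2_01.
have th_a1 : th1 * a1 = th1 / g1 - th1 by rewrite /a1; field; rewrite gt_eqF.
have th_a2 : th2 * a2 = th2 / g2 - th2 by rewrite /a2; field; rewrite gt_eqF.
have th_a1' : th1 * a1 ^+ 2 = th1 / g1 ^+ 2 - 2 * (th1 / g1) + th1.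
  by rewrite /a1; field; rewrite gt_eqF.
have th_a2' : th2 * a2 ^+ 2 = th2 / g2 ^+ 2 - 2 * (th2 / g2) + th2.
  by rewrite /a2; field; rewrite gt_eqF.
have m1 : c * -1 + (th1 * a1 + th2 * a2) = 0 by rewrite th_a1 th_a2 /c; lra.
have m2 : c * (-1) ^+ 2 + (th1 * a1 ^+ 2 + th2 * a2 ^+ 2) = 0.
  by rewrite th_a1' th_a2' /c; lra.
have := @moment_cancel_gradient_le [:: (c, -1); (th1, a1); (th2, a2)] x (x - xp) L3_ge0.
rewrite !big_cons !big_nil /= !addr0 => /(_ m1 m2).
have -> : x + -1 *: (x - xp) = xp by rewrite scaleN1r opprB addrC subrK.
have -> : c *: (gf xp - gf x) + (th1 *: (gf (x + a1 *: (x - xp)) - gf x)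
      + th2 *: (gf (x + a2 *: (x - xp)) - gf x))
    = c *: gf xp + th1 *: gf (x + a1 *: (x - xp)) + th2 *: gf (x + a2 *: (x - xp)) - gf x.
  by apply/rowP => i; rewrite !mxE /c; ring.
rewrite normrN normr1 expr1n mulr1 (ger0_norm a1_ge0) (ger0_norm a2_ge0).
rewrite ger0_norm; last by case/andP: c_01.
set B := L3 * enorm (x - xp) ^+ 3 / 6; set W := c + _ => T_le.
have B_ge0 : 0 <= B by rewrite divr_ge0 // mulr_ge0 // exprn_ge0 // enorm_ge0.
have W2 := extrapolation_weight_sqr_le th1 th2 c_01 g1_01 g2_01.
rewrite -/a1 -/a2 -addrA -/W in W2.
have BW : L3 ^+ 2 * enorm (x - xp) ^+ 6 / 12 = 3 * B ^+ 2.
  by rewrite /B -[6%N]/(3 * 2)%N exprM; field.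
rewrite BW; clearbody B W; apply: le_trans (_ : (B * W) ^+ 2 <= _).
  by rewrite ler_pXn2r ?nnegrE ?enorm_ge0 // (le_trans (enorm_ge0 _) T_le).
by have := ler_wpM2l (sqr_ge0 B) W2; rewrite exprMn; lra.
Qed.

Lemma momentum_potential_step x x1 m (eta th1 th2 g1 g2 pk p1 : R) :
  0 <= L3 -> 0 < eta -> m != 0 -> x1 = x - (eta / enorm m) *: m ->
  0 < g1 < 1 -> 0 < g2 < 1 -> 0 < th1 + th2 < 1 ->
  th1 / g1 + th2 / g2 = 1 -> th1 / g1 ^+ 2 + th2 / g2 ^+ 2 = 1 ->
  0 < pk -> 0 <= p1 -> (1 - (th1 + th2)) * p1 <= (1 - (th1 + th2) / 2) * pk ->
  f x1 + p1 * enorm ((1 - (th1 + th2)) *: m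
      + th1 *: gf (x1 + ((1 - g1) / g1) *: (x1 - x))
      + th2 *: gf (x1 + ((1 - g2) / g2) *: (x1 - x)) - gf x1) ^+ 2
  <= f x + pk * enorm (m - gf x) ^+ 2 - eta * enorm (gf x) + L1 / 2 * eta ^+ 2
     + 2 * eta ^+ 2 / ((th1 + th2) * pk)
     + L3 ^+ 2 * eta ^+ 6 * th1 ^+ 2 * p1 / (12 * g1 ^+ 6 * (th1 + th2))
     + L3 ^+ 2 * eta ^+ 6 * th2 ^+ 2 * p1 / (12 * g2 ^+ 6 * (th1 + th2))
     + L3 ^+ 2 * eta ^+ 6 * p1 / (12 * (th1 + th2)).
Proof.
move=> L3_ge0 eta_gt0 m_neq0 x1E g1_01 g2_01 /andP[th_gt0 th_lt1] mom1 mom2 pk_gt0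
  p1_ge0 p_step.
set z1 := x1 + _ *: _; set z2 := x1 + _ *: _.
set T := (1 - (th1 + th2)) *: gf x + th1 *: gf z1 + th2 *: gf z2 - gf x1.
have -> : (1 - (th1 + th2)) *: m + th1 *: gf z1 + th2 *: gf z2 - gf x1
    = (1 - (th1 + th2)) *: (m - gf x) + T by apply/rowP => i; rewrite !mxE; ring.
have descent := normalized_step_descent x eta_gt0 m_neq0; rewrite -x1E in descent.
have step_len : enorm (x1 - x) = eta.
  rewrite x1E addrAC subrr add0r enormN enormZ ger0_norm ?divr_ge0 ?enorm_ge0 ?ltW //.
  by rewrite divfK // enorm_eq0.
have th_01 : 0 <= th1 + th2 <= 1 by rewrite !ltW.
have := extrapolated_gradient_error x1 x L3_ge0 g1_01 g2_01 th_01 mom1 mom2.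
rewrite -/z1 -/z2 -/T step_len.
set Q := L3 ^+ 2 * eta ^+ 6 / 12 * _ => T_le.
have err : enorm ((1 - (th1 + th2)) *: (m - gf x) + T) ^+ 2
    <= (1 - (th1 + th2)) * enorm (m - gf x) ^+ 2 + Q / (th1 + th2).
  apply: le_trans (enorm_sqr_convexD_le _ _ _) _; first by rewrite th_gt0 ltW.
  have th_inv : 0 <= (th1 + th2)^-1 by rewrite invr_ge0 ltW.
  by rewrite lerD2l; exact: ler_wpM2r th_inv _ _ T_le.
have := ler_wpM2l p1_ge0 err.
have young := potential_weight_le eta (enorm (m - gf x)) th_gt0 pk_gt0 p_step.
move: g1_01 g2_01 => /andP[g1_gt0 _] /andP[g2_gt0 _].
have Q_split : p1 * (Q / (th1 + th2)) =
    L3 ^+ 2 * eta ^+ 6 * th1 ^+ 2 * p1 / (12 * g1 ^+ 6 * (th1 + th2))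
    + L3 ^+ 2 * eta ^+ 6 * th2 ^+ 2 * p1 / (12 * g2 ^+ 6 * (th1 + th2))
    + L3 ^+ 2 * eta ^+ 6 * p1 / (12 * (th1 + th2)).
  by rewrite /Q; field; rewrite !gt_eqF.
clearbody Q; lra.
Qed.

End SmoothObjective.

Section RealExpectation.
Variables (d : measure_display) (T : measurableType d) (R : realType).
Variable P : probability T R.
Implicit Types X Y : T -> R.

Definition integrableR X := P.-integrable setT (EFin \o X).

(* [fine] sends infinite integrals to [0]: meaningful only when [integrableR X]. *)
Definition expectR X : R := fine (\int[P]_x (X x)%:E).

Lemma expectRE X : integrableR X -> (\int[P]_x (X x)%:E = (expectR X)%:E)%E.
Proof. by move=> iX; rewrite /expectR fineK // integrable_fin_num. Qed.

Lemma integrableR_measurable X : integrableR X -> measurable_fun setT X.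
Proof. by move=> /measurable_int /measurable_EFinP. Qed.

Lemma integrableR_cst (c : R) : integrableR (fun=> c).
Proof. exact: finite_measure_integrable_cst. Qed.

Lemma integrableRD X Y : integrableR X -> integrableR Y -> integrableR (fun x => X x + Y x).
Proof. by move=> iX iY; apply: eq_integrable (integrableD _ iX iY) => //. Qed.

Lemma integrableRZ (k : R) X : integrableR X -> integrableR (fun x => k * X x).
Proof. by move=> iX; apply: eq_integrable (integrableZl _ k iX) => //. Qed.

Lemma integrableR_sum (I : Type) (s : seq I) (F : I -> T -> R) :
  (forall i, integrableR (F i)) -> integrableR (fun x => \sum_(i <- s) F i x).
Proof.
move=> iF; elim: s => [|i s IH].
  by apply: eq_integrable (integrableR_cst 0) => // x _; rewrite /= big_nil.
by apply: eq_integrable (integrableRD (iF i) IH) => // x _; rewrite /= big_cons.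
Qed.

Lemma integrableR_le X Y : measurable_fun setT X -> integrableR Y ->
  (forall x, `|X x| <= Y x) -> integrableR X.
Proof.
move=> mX iY XY; apply: le_integrable iY => //; first exact/measurable_EFinP.
by move=> x _; rewrite /comp !abse_EFin lee_fin (le_trans (XY x)) // ler_norm.
Qed.

Lemma integrableR_ge0 X : measurable_fun setT X -> (forall x, 0 <= X x) ->
  (\int[P]_x (X x)%:E < +oo)%E -> integrableR X.
Proof.
move=> mX X_ge0 fin; apply/integrableP; split; first exact/measurable_EFinP.
by under eq_integral do rewrite /comp abse_EFin ger0_norm //.
Qed.

Lemma expectR_cst (c : R) : expectR (fun=> c) = c.
Proof.
rewrite /expectR (_ : (fun x => c%:E) = cst c%:E) // integral_cst //.
have fine_mul1 (y : \bar R) : y = 1%E -> fine (c%:E * y)%E = c by move=> ->; rewrite mule1.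
exact/fine_mul1/probability_setT.
Qed.

Lemma expectRD X Y : integrableR X -> integrableR Y ->
  expectR (fun x => X x + Y x) = expectR X + expectR Y.
Proof.
move=> iX iY; rewrite /expectR.
under eq_integral do rewrite EFinD.
by rewrite integralD // (expectRE iX) (expectRE iY).
Qed.

Lemma expectRZ (k : R) X : integrableR X -> expectR (fun x => k * X x) = k * expectR X.
Proof.
move=> iX; rewrite /expectR.
under eq_integral do rewrite EFinM.
by rewrite integralZl // (expectRE iX).
Qed.

Lemma expectR_sum (I : Type) (s : seq I) (F : I -> T -> R) :
  (forall i, integrableR (F i)) ->
  expectR (fun x => \sum_(i <- s) F i x) = \sum_(i <- s) expectR (F i).
Proof.
move=> iF; elim: s => [|i s IH].
  by under eq_fun do rewrite big_nil; rewrite expectR_cst big_nil.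
under eq_fun do rewrite big_cons.
by rewrite expectRD ?IH ?big_cons //; exact: integrableR_sum.
Qed.

Lemma expectR_le X Y : integrableR X -> integrableR Y ->
  (forall x, X x <= Y x) -> expectR X <= expectR Y.
Proof.
move=> iX iY XY; rewrite -lee_fin -(expectRE iX) -(expectRE iY).
by apply: le_integral => // x _; rewrite lee_fin.
Qed.

End RealExpectation.

Lemma measurable_enorm_sqr (d : measure_display) (T : measurableType d) (R : realType)
    (n : nat) (V : T -> 'rV[R]_n) :
  (forall i, measurable_fun setT (fun x => V x 0 i)) ->
  measurable_fun setT (fun x => enorm (V x) ^+ 2).
Proof.
move=> mV; under eq_fun do rewrite enorm_sqr.
by apply: measurable_sum => i; apply: measurable_funM.
Qed.

Section OracleNoise.
Variables (d : measure_display) (T : measurableType d) (R : realType).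
Variables (P : probability T R) (n : nat).
Variables (G : 'rV[R]_n -> T -> 'rV[R]_n) (gf : 'rV[R]_n -> 'rV[R]_n) (sigma : R).
Hypothesis G_unbiased : forall x (i : 'I_n),
  P.-integrable setT (fun xi => (G x xi 0 i)%:E) /\
  (\int[P]_xi (G x xi 0 i)%:E = (gf x 0 i)%:E)%E.
Hypothesis G_variance : forall x,
  (\int[P]_xi ((enorm (G x xi - gf x)) ^+ 2)%:E <= (sigma ^+ 2)%:E)%E.

Lemma integrableR_oracle_error x i : integrableR P (fun xi => (G x xi - gf x) 0 i).
Proof.
under eq_fun do rewrite !mxE.
exact: integrableRD (G_unbiased x i).1 (integrableR_cst _ _).
Qed.

Lemma expectR_oracle_error x i : expectR P (fun xi => (G x xi - gf x) 0 i) = 0.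
Proof.
under eq_fun do rewrite !mxE.
rewrite expectRD ?expectR_cst; [|exact: (G_unbiased x i).1|exact: integrableR_cst].
by rewrite /expectR (G_unbiased x i).2 /= subrr.
Qed.

Lemma integrableR_dotv_oracle_error a x :
  integrableR P (fun xi => dotv a (G x xi - gf x)).
Proof.
by apply: integrableR_sum => i; apply: integrableRZ; exact: integrableR_oracle_error.
Qed.

Lemma expectR_dotv_oracle_error a x : expectR P (fun xi => dotv a (G x xi - gf x)) = 0.
Proof.
rewrite expectR_sum => [|i]; last exact/integrableRZ/integrableR_oracle_error.
rewrite big1 // => i _.
by rewrite expectRZ ?expectR_oracle_error ?mulr0 //; exact: integrableR_oracle_error.
Qed.

Lemma integrableR_oracle_error_sqr x :
  integrableR P (fun xi => enorm (G x xi - gf x) ^+ 2).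
Proof.
apply: integrableR_ge0 => [|xi|]; last exact: le_lt_trans (G_variance x) (ltry _).
- apply: measurable_enorm_sqr => i.
  exact/integrableR_measurable/integrableR_oracle_error.
- exact: sqr_ge0.
Qed.

Lemma expectR_oracle_error_sqr_le x :
  expectR P (fun xi => enorm (G x xi - gf x) ^+ 2) <= sigma ^+ 2.
Proof. by rewrite -lee_fin -expectRE ?G_variance //; exact: integrableR_oracle_error_sqr. Qed.

Lemma integral_two_point_noise_le (c p t1 t2 : R) a z1 z2 : 0 <= p ->
  (\int[P]_xi
     (c + p * enorm (a + (t1 *: (G z1 xi - gf z1) + t2 *: (G z2 xi - gf z2))) ^+ 2)%:E
   <= (c + p * (enorm a ^+ 2 + 2 * (t1 ^+ 2 + t2 ^+ 2) * sigma ^+ 2))%:E)%E.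
Proof.
move=> p_ge0.
pose N xi := t1 *: (G z1 xi - gf z1) + t2 *: (G z2 xi - gf z2).
pose S xi := 2 * t1 ^+ 2 * enorm (G z1 xi - gf z1) ^+ 2
             + 2 * t2 ^+ 2 * enorm (G z2 xi - gf z2) ^+ 2.
have iS : integrableR P S.
  by apply: integrableRD; apply: integrableRZ; exact: integrableR_oracle_error_sqr.
have ES : expectR P S <= 2 * (t1 ^+ 2 + t2 ^+ 2) * sigma ^+ 2.
  rewrite expectRD ?expectRZ; try (apply: integrableRZ);
    try exact: integrableR_oracle_error_sqr.
  have := ler_wpM2l (sqr_ge0 t1) (expectR_oracle_error_sqr_le z1).
  have := ler_wpM2l (sqr_ge0 t2) (expectR_oracle_error_sqr_le z2).
  lra.
have N_le xi : enorm (N xi) ^+ 2 <= S xi.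
  apply: le_trans (enorm_sqrD_le _ _) _.
  by rewrite /S !enormZ !exprMn !real_normK ?num_real // !mulrA.
have iN : integrableR P (fun xi => enorm (N xi) ^+ 2).
  apply: integrableR_le iS _ => [|xi]; last by rewrite ger0_norm ?sqr_ge0.
  apply: measurable_enorm_sqr => i; under eq_fun do rewrite !mxE.
  have mG z : measurable_fun setT (fun xi => G z xi 0 i).
    exact/integrableR_measurable/(G_unbiased z i).1.
  by apply: measurable_funD; apply: measurable_funM => //; apply: measurable_funB.
have iD : integrableR P (fun xi => dotv a (N xi)).
  under eq_fun do rewrite dotvDr !dotvZr.
  by apply: integrableRD; apply: integrableRZ; exact: integrableR_dotv_oracle_error.
have ED : expectR P (fun xi => dotv a (N xi)) = 0.
  under eq_fun do rewrite dotvDr !dotvZr.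
  rewrite expectRD ?expectRZ ?expectR_dotv_oracle_error ?mulr0 ?addr0 //;
    try (apply: integrableRZ); exact: integrableR_dotv_oracle_error.
rewrite (eq_integral (fun xi => ((c + p * enorm a ^+ 2)
           + (2 * p * dotv a (N xi) + p * enorm (N xi) ^+ 2))%:E)); last first.
  by move=> xi _; rewrite /N enorm_sqrD; congr (_%:E); ring.
rewrite expectRE; last by apply: integrableRD (integrableR_cst _ _) _;
  apply: integrableRD; apply: integrableRZ.
rewrite lee_fin expectRD ?expectR_cst; first last.
- by apply: integrableRD; apply: integrableRZ.
- exact: integrableR_cst.
rewrite expectRD ?expectRZ ?ED //; try (apply: integrableRZ) => //.
have := ler_wpM2l p_ge0 (le_trans (expectR_le iN iS N_le) ES); lra.
Qed.

End OracleNoise.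

Section Algorithm.
Variables (R : realType) (n : nat) (Xi : Type) (G : 'rV[R]_n -> Xi -> 'rV[R]_n).
Variables (q : nat) (x0 : 'rV[R]_n) (eta : nat -> R) (gamma theta : nat -> 'I_q -> R).
Local Notation state := (sfom_state G x0 eta gamma theta).
Local Notation x_ := (sfom_x G x0 eta gamma theta).
Local Notation m_ := (sfom_m G x0 eta gamma theta).

Lemma sfom_state_resample s j xi k :
  (k <= j)%N -> state (resample s j xi) k = state s k.
Proof.
elim: k => [//|k IH] k_lt_j /=; rewrite IH ?(ltnW k_lt_j) //.
case: (state s k) => [[x xp] mp].
by rewrite /sfom_mom /resample (ltn_eqF k_lt_j).
Qed.

Lemma sfom_x_resample s j xi k : (k <= j)%N -> x_ (resample s j xi) k = x_ s k.
Proof. by move=> k_le_j; rewrite /sfom_x sfom_state_resample. Qed.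

Lemma sfom_x_succ s k : x_ s k.+1 = x_ s k - (eta k / enorm (m_ s k)) *: m_ s k.
Proof. by rewrite /sfom_x /sfom_m /=; case: (state s k) => [[x xp] mp]. Qed.

Lemma sfom_m_succ_resample s k xi : m_ (resample s k.+1 xi) k.+1 =
  (1 - \sum_(t < q) theta k t) *: m_ s k
  + \sum_(t < q) theta k t *:
      G (x_ s k.+1 + ((1 - gamma k t) / gamma k t) *: (x_ s k.+1 - x_ s k)) xi.
Proof.
rewrite /sfom_m /sfom_x sfom_state_resample //=.
case: (state s k) => [[x xp] mp] /=.
by rewrite /sfom_mom /= /resample eqxx.
Qed.

End Algorithm.

Lemma big_ord2 (V : nmodType) (F : 'I_2 -> V) : \sum_(t < 2) F t = F ord0 + F ord_max.
Proof. by rewrite big_ord_recl big_ord1; congr (_ + F _); exact/val_inj. Qed.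

Theorem theorem3p3 (R : realType) (n : nat) (d : measure_display)
  (Xi : measurableType d) (P : probability Xi R)
  (f : 'rV[R]_n -> R) (gf : 'rV[R]_n -> 'rV[R]_n)
  (D2 : 'rV[R]_n -> 'rV[R]_n -> 'rV[R]_n -> R)
  (D3 : 'rV[R]_n -> 'rV[R]_n -> 'rV[R]_n -> 'rV[R]_n -> R)
  (G : 'rV[R]_n -> Xi -> 'rV[R]_n) (flow L1 L3 sigma : R)
  (x0 : 'rV[R]_n) (eta : nat -> R) (gamma theta : nat -> 'I_2 -> R)
  (p : nat -> R) :
  (* Assumption A *)
  (forall x, flow <= f x) ->
  (forall x, frechet_at f x (dotv (gf x))) ->
  0 < L1 -> (forall x y, enorm (gf y - gf x) <= L1 * enorm (y - x)) ->
  0 < sigma ->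
  (forall x (i : 'I_n), P.-integrable setT (fun xi => (G x xi 0 i)%:E) /\
     (\int[P]_xi (G x xi 0 i)%:E = (gf x 0 i)%:E)%E) ->
  (forall x, (\int[P]_xi ((enorm (G x xi - gf x)) ^+ 2)%:E <= (sigma ^+ 2)%:E)%E) ->
  (* Assumption B with p = 3: D2, D3 are the 2nd and 3rd derivatives *)
  (forall x h1, frechet_at (fun y => dotv (gf y) h1) x (D2 x h1)) ->
  (forall x h1 h2, frechet_at (fun y => D2 y h1 h2) x (D3 x h1 h2)) ->
  0 < L3 ->
  (forall x y h1 h2 h3, enorm h1 <= 1 -> enorm h2 <= 1 -> enorm h3 <= 1 ->
     D3 y h1 h2 h3 - D3 x h1 h2 h3 <= L3 * enorm (y - x)) ->
  (* Algorithm 1 parameters, q = 2 *)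
  (forall k, 0 < eta k) ->
  (forall k t, 0 < gamma k t < 1) ->
  (forall k, 0 < \sum_(t < 2) theta k t < 1) ->
  (forall k, theta k ord0 / gamma k ord0 + theta k ord_max / gamma k ord_max = 1) ->
  (forall k, theta k ord0 / gamma k ord0 ^+ 2
             + theta k ord_max / gamma k ord_max ^+ 2 = 1) ->
  (forall k, 0 < theta k ord0 + theta k ord_max < 1) ->
  (forall k, 0 < p k) ->
  (forall k, (1 - (theta k ord0 + theta k ord_max)) * p k.+1
             <= (1 - (theta k ord0 + theta k ord_max) / 2) * p k) ->
  forall (s : nat -> Xi) (k : nat),
  sfom_m G x0 eta gamma theta s k != 0 ->
  let xk := sfom_x G x0 eta gamma theta s k in
  let mk := sfom_m G x0 eta gamma theta s k in
  let th1 := theta k ord0 in let th2 := theta k ord_max in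
  let g1 := gamma k ord0 in let g2 := gamma k ord_max in
  (\int[P]_xi
     (f (sfom_x G x0 eta gamma theta (resample s k.+1 xi) k.+1)
      + p k.+1 * enorm (sfom_m G x0 eta gamma theta (resample s k.+1 xi) k.+1
                        - gf (sfom_x G x0 eta gamma theta (resample s k.+1 xi) k.+1)) ^+ 2)%:E
   <= (f xk + p k * enorm (mk - gf xk) ^+ 2
       - eta k * enorm (gf xk) + L1 / 2 * eta k ^+ 2
       + 2 * eta k ^+ 2 / ((th1 + th2) * p k)
       + L3 ^+ 2 * eta k ^+ 6 * th1 ^+ 2 * p k.+1 / (12 * g1 ^+ 6 * (th1 + th2))
       + L3 ^+ 2 * eta k ^+ 6 * th2 ^+ 2 * p k.+1 / (12 * g2 ^+ 6 * (th1 + th2))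
       + L3 ^+ 2 * eta k ^+ 6 * p k.+1 / (12 * (th1 + th2))
       + 2 * (th1 ^+ 2 + th2 ^+ 2) * p k.+1 * sigma ^+ 2)%:E)%E.
Proof.
move=> _ f_grad _ gf_lip _ G_unbiased G_variance D2_frechet D3_frechet L3_gt0 D3_lip
  eta_gt0 gamma_01 _ mom1 mom2 th_01 p_gt0 p_step s k mk_neq0 /=.
set xk := sfom_x _ _ _ _ _ s k; set mk := sfom_m _ _ _ _ _ s k.
set x1 := sfom_x G x0 eta gamma theta s k.+1.
set th1 := theta k ord0; set th2 := theta k ord_max.
set g1 := gamma k ord0; set g2 := gamma k ord_max.
set z1 := x1 + ((1 - g1) / g1) *: (x1 - xk); set z2 := x1 + ((1 - g2) / g2) *: (x1 - xk).
have next_error xi :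
    sfom_m G x0 eta gamma theta (resample s k.+1 xi) k.+1 - gf x1 =
    ((1 - (th1 + th2)) *: mk + th1 *: gf z1 + th2 *: gf z2 - gf x1)
    + (th1 *: (G z1 xi - gf z1) + th2 *: (G z2 xi - gf z2)).
  rewrite sfom_m_succ_resample -/x1 -/xk -/mk !big_ord2 -/th1 -/th2 -/g1 -/g2 -/z1 -/z2.
  by apply/rowP => i; rewrite !mxE; ring.
under eq_integral do rewrite sfom_x_resample // next_error.
apply: le_trans (integral_two_point_noise_le G_unbiased G_variance _ _ _ _ _ _
  (ltW (p_gt0 k.+1))) _.
have := momentum_potential_step f_grad gf_lip D2_frechet D3_frechet D3_lip (ltW L3_gt0)
  (eta_gt0 k) mk_neq0 (sfom_x_succ G x0 eta gamma theta s k) (gamma_01 k ord0)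
  (gamma_01 k ord_max) (th_01 k) (mom1 k) (mom2 k) (p_gt0 k) (ltW (p_gt0 k.+1)) (p_step k).
rewrite -/x1 -/xk -/mk -/th1 -/th2 -/g1 -/g2 -/z1 -/z2 lee_fin; lra.
Qed.
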